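(* Let $\boldsymbol{\lambda}\in\Delta_N$, $\boldsymbol{\nu}=(\nu_1,\dots,\nu_N)\in\mathcal{P}_1(\mathbb{R})^N$, $\theta\in[0,1]$ and $\nu^\theta=\mathrm{VMed}_{\boldsymbol{\lambda}}(\theta,\boldsymbol{\nu})$. If $\nu_1,\dots,\nu_N$ are absolutely continuous with respect to Lebesgue measure with densities $f_1,\dots,f_N\in L^1(\mathbb{R})$, then $\nu^\theta$ is absolutely continuous with a density $f_{\nu^\theta}\in L^1(\mathbb{R})$ satisfying $$\min_{1\le i\le N}f_i\le f_{\nu^\theta}\le\max_{1\le i\le N}f_i\quad\text{a.e. on }\mathbb{R}.$$ In particular, if for some $p\in[1,\infty]$ one has $f_i\in L^p(\mathbb{R})$ for $i=1,\dots,N$, then $f_{\nu^\theta}\in L^p(\mathbb{R})$ and $$\|\min_i f_i\|_{L^p(\mathbb{R})}\le\|f_{\nu^\theta}\|_{L^p(\mathbb{R})}\le\|\max_i f_i\|_{L^p(\mathbb{R})}\le\sum_{i=1}^N\|f_i\|_{L^p(\mathbb{R})}.$$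
   Context: $\Delta_N=\{(\lambda_1,\dots,\lambda_N)\in\mathbb{R}_+^N:\sum_i\lambda_i=1\}$; $\mathcal{P}_1(\mathbb{R})$ denotes Borel probability measures on $\mathbb{R}$ with finite first moment. For $\nu\in\mathcal{P}_1(\mathbb{R})$, $F_\nu(x)=\nu((-\infty,x])$ is its cdf. For $\mathbf{x}=(x_1,\dots,x_N)\in\mathbb{R}^N$, the lower and upper weighted medians are $\mathrm{M}^-_{\boldsymbol{\lambda}}(\mathbf{x})=\inf\{y\in\mathbb{R}:\sum_{i:x_i\le y}\lambda_i\ge\frac12\}$ and $\mathrm{M}^+_{\boldsymbol{\lambda}}(\mathbf{x})=\sup\{y\in\mathbb{R}:\sum_{i:x_i<y}\lambda_i\le\frac12\}$. Set $F^\pm(x)=\mathrm{M}^\pm_{\boldsymbol{\lambda}}(F_{\nu_1}(x),\dots,F_{\nu_N}(x))$ and $F_\theta=(1-\theta)F^-+\theta F^+$; $F_\theta$ is the cdf of a probability measure in $\mathcal{P}_1(\mathbb{R})$, which is denoted $\mathrm{VMed}_{\boldsymbol{\lambda}}(\theta,\boldsymbol{\nu})$ (vertical median selection). *)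

From HB Require Import structures.
From mathcomp Require Import all_boot all_order all_algebra.
From mathcomp Require Import all_classical all_reals all_analysis.
Set Implicit Arguments. Unset Strict Implicit. Unset Printing Implicit Defensive.
Import Order.TTheory GRing.Theory Num.Theory.
Local Open Scope classical_set_scope.
Local Open Scope ring_scope.

(* Cumulative distribution function F_nu(x) = nu((-oo, x]) of a
   (probability) measure on R.  For a probability measure the value is
   finite, so [fine] is harmless. *)
Definition mcdf (R : realType) (nu : set R -> \bar R) (x : R) : R :=
  fine (nu [set` `]-oo, x]]).

Definition wmed_minus (R : realType) (N : nat) (lam : 'I_N -> R)
  (xs : 'I_N -> R) : R :=
  inf [set y : R | 2^-1 <= \sum_(i < N | xs i <= y) lam i].

Definition wmed_plus (R : realType) (N : nat) (lam : 'I_N -> R)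
  (xs : 'I_N -> R) : R :=
  sup [set y : R | \sum_(i < N | xs i < y) lam i <= 2^-1].

Definition Fminus (R : realType) (N : nat) (lam : 'I_N -> R)
  (nu : 'I_N -> set R -> \bar R) (x : R) : R :=
  wmed_minus lam (fun i => mcdf (nu i) x).

Definition Fplus (R : realType) (N : nat) (lam : 'I_N -> R)
  (nu : 'I_N -> set R -> \bar R) (x : R) : R :=
  wmed_plus lam (fun i => mcdf (nu i) x).

(* F_theta = (1 - theta) F^- + theta F^+ : the cdf of VMed_lam(theta, nu) *)
Definition Ftheta (R : realType) (N : nat) (lam : 'I_N -> R)
  (theta : R) (nu : 'I_N -> set R -> \bar R) (x : R) : R :=
  (1 - theta) * Fminus lam nu x + theta * Fplus lam nu x.

(* pointwise min_i f_i and max_i f_i (meaningful for N >= 1, which is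
   forced by lam in Delta_N) *)
Definition min_fun (R : realType) (N : nat) (f : 'I_N -> R -> R) (x : R) : R :=
  fine (\big[mine/+oo%E]_(i < N) (f i x)%:E).

Definition max_fun (R : realType) (N : nat) (f : 'I_N -> R -> R) (x : R) : R :=
  fine (\big[maxe/-oo%E]_(i < N) (f i x)%:E).

From HB Require Import structures.
From mathcomp Require Import all_boot all_order all_algebra.
From mathcomp Require Import all_classical all_reals all_analysis.
From mathcomp Require Import lra measurable_realfun ess_sup_inf.
Import Order.TTheory GRing.Theory Num.Theory numFieldTopology.Exports.
Local Open Scope classical_set_scope.
Local Open Scope ring_scope.

(* On a half-open interval ]a, b] the cdf of nu_i increases by the integral of
   f_i, which lies between the integrals of min_i f_i and max_i f_i. Weighted
   medians are monotone and commute with adding a constant, so the increment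
   F_theta b - F_theta a obeys the same two bounds. Comparing increments on
   half-open intervals compares the measures themselves (uniqueness of the
   Lebesgue-Stieltjes extension), so nu^theta lies between the measures with
   densities min_i f_i and max_i f_i. Hence nu^theta is absolutely continuous,
   and its Radon-Nikodym density g has integrals between those of min_i f_i and
   max_i f_i on every Borel set, i.e. min_i f_i <= g <= max_i f_i a.e. As the
   f_i are nonnegative a.e., the L^p bounds follow from the monotonicity of the
   L^p norm and Minkowski's inequality. *)

Section weighted_median.
Context (R : realType) (N : nat) (lam : 'I_N -> R).
Hypotheses (lam_ge0 : forall i, 0 <= lam i) (lam_sum1 : \sum_(i < N) lam i = 1).

Lemma le_sum_norm (xs : 'I_N -> R) i : xs i <= \sum_(j < N) `|xs j|.
Proof. by rewrite (bigD1 i) //= (le_trans (ler_norm _)) // lerDl sumr_ge0. Qed.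

Lemma ge_sum_norm (xs : 'I_N -> R) i : - \sum_(j < N) `|xs j| <= xs i.
Proof.
rewrite lerNl (le_trans (le_sum_norm (fun j => - xs j) i)) //.
by under eq_bigr do rewrite normrN.
Qed.

Lemma ler_sum_lam (P Q : pred 'I_N) :
  subpred P Q -> \sum_(i < N | P i) lam i <= \sum_(i < N | Q i) lam i.
Proof.
move=> PQ; rewrite [leLHS]big_mkcond [leRHS]big_mkcond /=.
apply: ler_sum => i _; case: ifP => [/PQ -> //|_]; by case: ifP.
Qed.

Lemma wmed_minus_le_shift (xs ys : 'I_N -> R) (c : R) :
  (forall i, ys i <= xs i + c) -> wmed_minus lam ys <= wmed_minus lam xs + c.
Proof.
move=> yxc; rewrite /wmed_minus -lerBlDr.
have lb : has_lbound [set y | 2^-1 <= \sum_(i < N | ys i <= y) lam i].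
  exists (- \sum_(j < N) `|ys j|) => y /=; apply: contraLR; rewrite -!ltNge => y_lt.
  rewrite big_pred0 ?invr_gt0 ?ltr0n // => i.
  by apply/negbTE; rewrite -ltNge (lt_le_trans y_lt) ?ge_sum_norm.
apply: lb_le_inf.
  exists (\sum_(j < N) `|xs j|) => /=.
  by rewrite (eq_bigl xpredT) ?lam_sum1 ?invf_le1 ?ler1n // => i; rewrite le_sum_norm.
move=> y xy; rewrite lerBlDr; apply: (ge_inf lb); apply: le_trans xy _.
by apply: ler_sum_lam => i xi; rewrite (le_trans (yxc i)) ?lerD2r.
Qed.

Lemma wmed_plus_le_shift (xs ys : 'I_N -> R) (c : R) :
  (forall i, ys i <= xs i + c) -> wmed_plus lam ys <= wmed_plus lam xs + c.
Proof.
move=> yxc; rewrite /wmed_plus -lerBlDr.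
have below_all (zs : 'I_N -> R) :
    \sum_(i < N | zs i < - \sum_(j < N) `|zs j|) lam i <= 2^-1.
  by rewrite big_pred0 ?invr_ge0 ?ler0n // => i; apply/negbTE; rewrite -leNgt ge_sum_norm.
have ub : has_sup [set y | \sum_(i < N | xs i < y) lam i <= 2^-1].
  split; first by exists (- \sum_(j < N) `|xs j|); exact: below_all.
  exists (\sum_(j < N) `|xs j|) => y /=; apply: contraLR; rewrite -!ltNge => y_gt.
  rewrite (eq_bigl xpredT) ?lam_sum1 ?invf_lt1 ?ltr1n // => i.
  by rewrite (le_lt_trans (le_sum_norm _ _)).
rewrite lerBlDr; apply: ge_sup; first by exists (- \sum_(j < N) `|ys j|); exact: below_all.
move=> y yy; rewrite -lerBlDr; apply: (sup_upper_bound ub); apply: le_trans yy.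
by apply: ler_sum_lam => i xi; rewrite (le_lt_trans (yxc i)) // -ltrBrDr.
Qed.

Lemma Ftheta_increment_between (theta : R) (nu : 'I_N -> set R -> \bar R)
    (a b c d : R) : 0 <= theta <= 1 ->
  (forall i, c <= mcdf (nu i) b - mcdf (nu i) a <= d) ->
  c <= Ftheta lam theta nu b - Ftheta lam theta nu a <= d.
Proof.
move=> /andP[theta0 theta1] nu_cd.
have [lower upper] : (forall i, mcdf (nu i) a <= mcdf (nu i) b + - c) /\
    (forall i, mcdf (nu i) b <= mcdf (nu i) a + d).
  by split=> i; have /andP[] := nu_cd i; lra.
have := wmed_minus_le_shift _ _ _ lower; have := wmed_plus_le_shift _ _ _ lower.
have := wmed_minus_le_shift _ _ _ upper; have := wmed_plus_le_shift _ _ _ upper.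
rewrite /Ftheta /Fminus /Fplus => *; apply/andP; split; nra.
Qed.

End weighted_median.

Section measureR.
Context {R : realType} (P : {finite_measure set R -> \bar R}).

(* The Borel sets of [R] are also the measurable sets of [measurableTypeR R],
   where [lebesgue_measure] lives; [measureR P] is [P] seen there. *)
Definition measureR : set (measurableTypeR R) -> \bar R := P.

Let measureR0 : measureR set0 = 0%E. Proof. exact: measure0. Qed.
Let measureR_ge0 A : (0 <= measureR A)%E. Proof. exact: measure_ge0. Qed.
Let measureR_semi_sigma_additive : semi_sigma_additive measureR.
Proof. exact: (@measure_semi_sigma_additive _ R R P). Qed.
HB.instance Definition _ := isMeasure.Build _ _ _ measureR
  measureR0 measureR_ge0 measureR_semi_sigma_additive.

Lemma measureR_fin : fin_num_fun measureR.
Proof. by move=> A mA; exact: (@fin_num_measure _ R R P). Qed.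
HB.instance Definition _ := Measure_isFinite.Build _ _ _ measureR measureR_fin.

End measureR.

Section cdf.
Context {R : realType} {m : {measure set (measurableTypeR R) -> \bar R}}.
Hypothesis mfin : fin_num_fun m.

Lemma mcdf_itv a b : a <= b -> m `]a, b]%classic = (mcdf m b - mcdf m a)%:E.
Proof.
move=> ab; rewrite /mcdf EFinB !fineK ?mfin //.
have -> : `]a, b]%classic = `]-oo, b] `\` `]-oo, a] :> set R.
  by rewrite -[RHS]setCK setCD setCitvl setUC -[LHS]setCK setCitv.
rewrite measureD ?setIidr //; first exact: subset_itvl.
by rewrite -ge0_fin_numE // mfin.
Qed.

Lemma mcdf_nondecreasing : nondecreasing (mcdf m).
Proof. by move=> a b ab; rewrite -subr_ge0 -lee_fin -mcdf_itv. Qed.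

(* The right limit at [a] exists by monotonicity; continuity from above along
   [a + 1/(n+1)] identifies it with [m `]-oo, a]]. *)
Lemma mcdf_right_continuous : right_continuous (mcdf m).
Proof.
move=> a; rewrite /mcdf; apply: fine_cvg; rewrite fineK ?mfin //.
pose G r := m `]-oo, r]%classic.
have Gnd : {homo G : x y / x <= y >-> (x <= y)%E}.
  by move=> x y xy; rewrite le_measure ?inE //; exact: subitvPr.
pose s := fine (ereal_inf (G @` `]a, a + 1]%classic)).
have G_s : G r @[r --> a^'+] --> s%:E.
  rewrite /s fineK.
  - apply: nondecreasing_at_right_cvge; first by rewrite ltBSide /= ?ltrDl.
    by move=> *; exact: Gnd.
  - apply/fin_numPlt/andP; split.
    + by rewrite (lt_le_trans (ltNyr 0)) ?le_ereal_inf_tmp //= => _ [? _ <-].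
    + rewrite (@le_lt_trans _ _ (G (a + 1)%R)) ?ltey_eq ?mfin //.
      apply: ge_ereal_inf; exists (G (a + 1)%R) => //.
      by exists (a + 1)%R => //=; rewrite in_itv /=; apply/andP; rewrite ltrDl.
have G_ns : G (a + n.+1%:R^-1) @[n --> \oo] --> s%:E.
  move/cvge_at_rightP : G_s; apply; split=> [n|]; rewrite ?ltrDl //.
  rewrite -[X in _ --> X]addr0; apply: (@cvgD _ R^o); first exact: cvg_cst.
  by rewrite gtr0_cvgV0 ?cvg_shiftS; [exact: cvgr_idn | near=> n].
have G_na : G (a + n.+1%:R^-1) @[n --> \oo] --> G a.
  pose F n : set (measurableTypeR R) := `]-oo, a + n.+1%:R^-1]%classic.
  suff : m (F n) @[n --> \oo] --> m (\bigcap_n F n) by rewrite /F -itvNycEbigcap.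
  apply: nonincreasing_cvg_mu => [| | |p q pq].
  - by rewrite ltey_eq mfin //; exact: measurable_itv.
  - by move=> ?; exact: measurable_itv.
  - by apply: bigcap_measurable => [|? _]; [exists 0%N|exact: measurable_itv].
  - apply/subsetPset; apply: subset_itvl.
    by rewrite bnd_simp lerD2l lef_pV2 ?posrE // ler_nat.
by move: G_s; rewrite (cvg_unique _ G_ns G_na).
Unshelve. all: by end_near. Qed.

End cdf.

Section lebesgue_stieltjes.
Context {R : realType}.

Lemma lebesgue_stieltjes_measure_itv (F : cumulative R R) (a b : R) :
  a <= b -> lebesgue_stieltjes_measure F `]a, b]%classic = (F b - F a)%:E.
Proof.
move=> ab; rewrite /lebesgue_stieltjes_measure /measure_extension /=.
by rewrite measurable_mu_extE /= ?wlength_itv_bnd //; exact: is_ocitv.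
Qed.

Lemma lebesgue_stieltjes_measure_itv_unique (F : cumulative R R)
    (m : {measure set (measurableTypeR R) -> \bar R}) :
  (forall a b, a <= b -> m `]a, b]%classic = (F b - F a)%:E) ->
  forall A, measurable A -> lebesgue_stieltjes_measure F A = m A.
Proof.
move=> mF; apply: lebesgue_stieltjes_measure_unique => _ [[a b] _ <-].
have [ab|ba] := leP a b; last by rewrite set_itv_ge ?measure0 // bnd_simp -leNgt ltW.
by rewrite lebesgue_stieltjes_measure_itv // mF.
Qed.

(* [m2 = m1 + mu_K], where [mu_K] is the Lebesgue-Stieltjes measure of the
   function [K = mcdf m2 - mcdf m1], nondecreasing by hypothesis. *)
Lemma le_measure_of_itv (m1 m2 : {measure set (measurableTypeR R) -> \bar R}) :
  fin_num_fun m1 -> fin_num_fun m2 ->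
  (forall a b, a <= b -> (m1 `]a, b]%classic <= m2 `]a, b]%classic)%E) ->
  forall A, measurable A -> (m1 A <= m2 A)%E.
Proof.
move=> m1fin m2fin m12.
pose K x := mcdf m2 x - mcdf m1 x.
have K_nd : nondecreasing K.
  by move=> a b ab; have := m12 a b ab; rewrite !mcdf_itv // lee_fin /K; lra.
have K_rc : right_continuous K.
  by move=> a; apply: cvgB; exact: mcdf_right_continuous.
pose FK : cumulative R R := HB.pack_for (cumulative R R) K
  (isCumulative.Build R _ R K K_nd K_rc).
pose F2 : cumulative R R := HB.pack_for (cumulative R R) (mcdf m2)
  (isCumulative.Build R _ R (mcdf m2) (mcdf_nondecreasing m2fin)
     (mcdf_right_continuous m2fin)).
have m2E A : measurable A -> m2 A = (m1 A + lebesgue_stieltjes_measure FK A)%E.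
  move=> mA; rewrite -measure_addE; transitivity (lebesgue_stieltjes_measure F2 A).
    by apply/esym/lebesgue_stieltjes_measure_itv_unique => // a b ab; rewrite mcdf_itv.
  apply: lebesgue_stieltjes_measure_itv_unique => // a b ab.
  apply: eq_trans (measure_addE _ _ _) _.
  transitivity ((mcdf m1 b - mcdf m1 a)%:E + (K b - K a)%:E)%E.
    by congr (_ + _)%E; [exact: mcdf_itv | exact: lebesgue_stieltjes_measure_itv].
  by rewrite -EFinD /=; congr EFin; rewrite /K; lra.
by move=> A mA; rewrite m2E // leeDl.
Qed.

End lebesgue_stieltjes.

Section ae_integral.
Context {d} {T : measurableType d} {R : realType} (mu : {measure set T -> \bar R}).

Lemma ae_le_of_integral_le (u v : T -> R) :
  mu.-integrable setT (EFin \o u) -> mu.-integrable setT (EFin \o v) ->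
  (forall E, measurable E ->
    (\int[mu]_(x in E) (u x)%:E <= \int[mu]_(x in E) (v x)%:E)%E) ->
  {ae mu, forall x, u x <= v x}.
Proof.
move=> iu iv uv.
have [meas_u meas_v] := (measurable_int _ iu, measurable_int _ iv).
pose A := [set x | v x < u x].
have mA : measurable A.
  have := measurable_lte measurableT meas_v meas_u; rewrite setTI.
  by congr measurable; apply/seteqP; split => x /=; rewrite lte_fin.
pose w x := u x - v x.
have int_A_0 : (\int[mu]_(x in A) (w x)%:E = 0)%E.
  apply/eqP; rewrite eq_le; apply/andP; split.
    rewrite /w; under eq_integral do rewrite EFinB.
    rewrite integralB_EFin ?sube_le0 ?uv //.
    + exact: integrableS measurableT mA (subsetT _) iu.
    + exact: integrableS measurableT mA (subsetT _) iv.
  by apply: integral_ge0 => x Ax; rewrite lee_fin subr_ge0 ltW.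
have : ae_eq mu A (EFin \o w) (cst 0%E).
  apply/(ae_eq_integral_abs mu mA).
    apply: measurable_funTS; apply/measurable_EFinP.
    by apply: measurable_funB; apply/measurable_EFinP.
  rewrite -int_A_0; apply: eq_integral => x; rewrite inE => Ax.
  by rewrite gee0_abs // lee_fin subr_ge0 ltW.
apply: filterS => x /= uv0; rewrite leNgt; apply/negP => vu.
by move: (uv0 vu) => /eqP; rewrite eqe subr_eq0 => /eqP uvx; rewrite uvx ltxx in vu.
Qed.

Lemma integral_funrpos_ae (A : set T) (h : T -> R) : measurable A ->
  measurable_fun setT h -> {ae mu, forall x, 0 <= h x} ->
  (\int[mu]_(x in A) (h x)%:E = \int[mu]_(x in A) (h^\+ x)%:E)%E.
Proof.
move=> mA mh h0; apply: ae_eq_integral => //.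
- by apply: measurable_funTS; apply/measurable_EFinP.
- by apply: measurable_funTS; apply/measurable_EFinP; exact: measurable_funrpos.
by apply: filterS h0 => x hx _; rewrite /funrpos /= max_l.
Qed.

Lemma Lnorm_le_ae (u v : T -> R) (p : \bar R) : (1 <= p)%E ->
  measurable_fun setT u -> measurable_fun setT v ->
  {ae mu, forall x, `|u x| <= `|v x|} ->
  ('N[mu]_p[EFin \o u] <= 'N[mu]_p[EFin \o v])%E.
Proof.
case: p => [r||] //= p1 meas_u meas_v uv; rewrite unlock /Lnorm.
  have r0 : 0 < r by rewrite lee_fin in p1; exact: lt_le_trans p1.
  have mp (w : T -> R) : measurable_fun setT w ->
      measurable_fun setT (fun x => (`|(w x)%:E| `^ r)%E).
    move=> mw; under eq_fun do rewrite abse_EFin poweR_EFin.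
    apply/measurable_EFinP.
    apply: (@measurableT_comp _ _ _ _ _ _ (@powR R ^~ r)) => //.
    exact: measurableT_comp.
  apply: gt0_ler_poweR; first by rewrite invr_ge0 ltW.
  - by rewrite in_itv /= leey andbT integral_ge0 // => x _; rewrite poweR_ge0.
  - by rewrite in_itv /= leey andbT integral_ge0 // => x _; rewrite poweR_ge0.
  apply: ae_ge0_le_integral => //; try (by move=> x _; exact: poweR_ge0); try exact: mp.
  apply: filterS uv => x uvx _ /=.
  rewrite ?abse_EFin ?poweR_EFin ?lee_fin; apply: ge0_ler_powR; rewrite ?nnegrE //.
  exact: ltW.
case: ifPn => // _; apply: le_ess_sup.
by apply: filterS uv => x uvx; rewrite /= ?abse_EFin lee_fin.
Qed.

Lemma Lnorm_sum_le (p : \bar R) (I : Type) (f : I -> T -> R) :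
  (1 <= p)%E -> (forall i, measurable_fun setT (f i)) -> forall s : seq I,
  ('N[mu]_p[EFin \o (fun x => (\sum_(i <- s) f i x)%R)] <=
     \sum_(i <- s) 'N[mu]_p[EFin \o f i])%E.
Proof.
move=> p1 mf; elim => [|j s IH].
  rewrite big_nil; under eq_fun do rewrite big_nil.
  by rewrite Lnorm0 // gt_eqF // (lt_le_trans _ p1).
rewrite big_cons; under eq_fun do rewrite big_cons.
apply: le_trans (eminkowski _ (mf j) (measurable_sum _ mf) p1) _.
by rewrite leeD2l.
Qed.

Lemma ae_ge0_of_integral_ge0 (h : T -> R) :
  mu.-integrable setT (EFin \o h) ->
  (forall E, measurable E -> (0 <= \int[mu]_(x in E) (h x)%:E)%E) ->
  {ae mu, forall x, 0 <= h x}.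
Proof.
move=> ih h0; have int0 : mu.-integrable setT (EFin \o cst (0 : R)).
  exact: integrable0.
by apply: (ae_le_of_integral_le _ _ int0 ih) => E mE; rewrite integral0 h0.
Qed.

Lemma Lnorm_le_ae_between (l g u : T -> R) (p : \bar R) : (1 <= p)%E ->
  measurable_fun setT l -> measurable_fun setT g -> measurable_fun setT u ->
  {ae mu, forall x, [/\ 0 <= l x, l x <= g x & g x <= u x]} ->
  ('N[mu]_p[EFin \o l] <= 'N[mu]_p[EFin \o g] /\
   'N[mu]_p[EFin \o g] <= 'N[mu]_p[EFin \o u])%E.
Proof.
move=> p1 meas_l meas_g meas_u lgu; split; apply: Lnorm_le_ae => //.
  apply: filterS lgu => x [l0 lg _].
  by rewrite ger0_norm // ger0_norm // (le_trans l0).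
apply: filterS lgu => x [l0 lg gu]; have g0 := le_trans l0 lg.
by rewrite ger0_norm // ger0_norm // (le_trans g0).
Qed.

End ae_integral.

Section min_max_fun.
Context {R : realType} {N : nat} {f : 'I_N -> R -> R}.
Local Open Scope ereal_scope.

Lemma bigmaxe_EFin_cases (a : 'I_N -> R) (s : seq 'I_N) :
  \big[maxe/-oo]_(i <- s) (a i)%:E = -oo \/
  exists j, \big[maxe/-oo]_(i <- s) (a i)%:E = (a j)%:E.
Proof.
elim: s => [|j s [IH|[k IH]]]; rewrite ?big_nil ?big_cons; [by left| |].
  by right; exists j; rewrite IH max_l // leNye.
right; rewrite IH; case: (leP (a k) (a j)) => h.
  by exists j; rewrite max_l // lee_fin.
by exists k; rewrite max_r // lee_fin ltW.
Qed.

Lemma bigmine_EFin_cases (a : 'I_N -> R) (s : seq 'I_N) :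
  \big[mine/+oo]_(i <- s) (a i)%:E = +oo \/
  exists j, \big[mine/+oo]_(i <- s) (a i)%:E = (a j)%:E.
Proof.
elim: s => [|j s [IH|[k IH]]]; rewrite ?big_nil ?big_cons; [by left| |].
  by right; exists j; rewrite IH min_l // leey.
right; rewrite IH; case: (leP (a k) (a j)) => h.
  by exists k; rewrite min_r // lee_fin.
by exists j; rewrite min_l // lee_fin ltW.
Qed.

(* [fine] sends the empty extrema [-oo] and [+oo] (when [N = 0]) to [0]. *)
Lemma max_fun_cases x : max_fun f x = 0%R \/ exists j, max_fun f x = f j x.
Proof.
rewrite /max_fun; have [->|[j ->]] := bigmaxe_EFin_cases (f^~ x) (index_enum 'I_N).
  by left.
by right; exists j.
Qed.

Lemma min_fun_cases x : min_fun f x = 0%R \/ exists j, min_fun f x = f j x.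
Proof.
rewrite /min_fun; have [->|[j ->]] := bigmine_EFin_cases (f^~ x) (index_enum 'I_N).
  by left.
by right; exists j.
Qed.

Lemma le_max_fun i x : (f i x <= max_fun f x)%R.
Proof.
have : (f i x)%:E <= \big[maxe/-oo]_(j < N) (f j x)%:E.
  by rewrite (bigD1 i) //= le_max lexx.
rewrite /max_fun; have [->|[j ->]] := bigmaxe_EFin_cases (f^~ x) (index_enum 'I_N).
  by rewrite leeNy_eq.
by rewrite lee_fin.
Qed.

Lemma min_fun_le i x : (min_fun f x <= f i x)%R.
Proof.
have : \big[mine/+oo]_(j < N) (f j x)%:E <= (f i x)%:E.
  by rewrite (bigD1 i) //= ge_min lexx.
rewrite /min_fun; have [->|[j ->]] := bigmine_EFin_cases (f^~ x) (index_enum 'I_N).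
  by rewrite leye_eq.
by rewrite lee_fin.
Qed.

Lemma min_fun_ge0 x : (forall i, 0 <= f i x)%R -> (0 <= min_fun f x)%R.
Proof. by move=> f0; have [->|[j ->]] := min_fun_cases x. Qed.

Lemma max_fun_ge0 x : (forall i, 0 <= f i x)%R -> (0 <= max_fun f x)%R.
Proof. by move=> f0; have [->|[j ->]] := max_fun_cases x. Qed.

Let norm_le_sum_norm j x : (`|f j x| <= \sum_(i < N) `|f i x|)%R.
Proof. by rewrite (bigD1 j) //= lerDl sumr_ge0. Qed.

Lemma norm_max_fun_le x : (`|max_fun f x| <= \sum_(i < N) `|f i x|)%R.
Proof.
have [->|[j ->]] := max_fun_cases x; last exact: norm_le_sum_norm.
by rewrite normr0 sumr_ge0.
Qed.

Lemma norm_min_fun_le x : (`|min_fun f x| <= \sum_(i < N) `|f i x|)%R.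
Proof.
have [->|[j ->]] := min_fun_cases x; last exact: norm_le_sum_norm.
by rewrite normr0 sumr_ge0.
Qed.

Hypothesis mf : forall i, measurable_fun (setT : set (measurableTypeR R)) (f i).

Lemma measurable_max_fun : measurable_fun (setT : set (measurableTypeR R)) (max_fun f).
Proof.
apply: (measurableT_comp (fine_measurable measurableT)) => //.
elim: (index_enum _) => [|j s IH].
  by under eq_fun do rewrite big_nil; exact: measurable_cst.
under eq_fun do rewrite big_cons.
by apply: measurable_maxe => //; apply/measurable_EFinP.
Qed.

Lemma measurable_min_fun : measurable_fun (setT : set (measurableTypeR R)) (min_fun f).
Proof.
apply: (measurableT_comp (fine_measurable measurableT)) => //.
elim: (index_enum _) => [|j s IH].
  by under eq_fun do rewrite big_nil; exact: measurable_cst.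
under eq_fun do rewrite big_cons.
by apply: measurable_mine => //; apply/measurable_EFinP.
Qed.

Let integrable_le_sum_norm (w : R -> R) :
  (forall i, lebesgue_measure.-integrable setT (EFin \o f i)) ->
  measurable_fun (setT : set (measurableTypeR R)) w ->
  (forall x, `|w x| <= \sum_(i < N) `|f i x|)%R ->
  lebesgue_measure.-integrable setT (EFin \o w).
Proof.
move=> fi mw wf.
have int_sum : lebesgue_measure.-integrable setT
    (fun x => \sum_(i < N) (`|f i x|)%:E)%E.
  by apply: integrable_sum => [|i _]; [exact: measurableT | exact: integrable_norm].
apply: (le_integrable measurableT _ _ int_sum); first exact/measurable_EFinP.
move=> x _; rewrite /= sumEFin !abse_EFin lee_fin.
by rewrite (ger0_norm (sumr_ge0 _ _)) ?wf.
Qed.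

Lemma integrable_max_fun :
  (forall i, lebesgue_measure.-integrable setT (EFin \o f i)) ->
  lebesgue_measure.-integrable setT (EFin \o max_fun f).
Proof.
move=> fi; apply: integrable_le_sum_norm => //; first exact: measurable_max_fun.
exact: norm_max_fun_le.
Qed.

Lemma integrable_min_fun :
  (forall i, lebesgue_measure.-integrable setT (EFin \o f i)) ->
  lebesgue_measure.-integrable setT (EFin \o min_fun f).
Proof.
move=> fi; apply: integrable_le_sum_norm => //; first exact: measurable_min_fun.
exact: norm_min_fun_le.
Qed.

Lemma Lnorm_max_fun_le_sum (p : \bar R) : 1 <= p ->
  'N[lebesgue_measure]_p[EFin \o max_fun f] <=
    \sum_(i < N) 'N[lebesgue_measure]_p[EFin \o f i].
Proof.
move=> p1; have mnf i := measurableT_comp (@normr_measurable R _) (mf i).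
apply: (@le_trans _ _ ('N[lebesgue_measure]_p[EFin \o (fun x => \sum_(i < N) `|f i x|)%R])).
  apply: Lnorm_le_ae => //; first exact: measurable_max_fun.
    exact: measurable_sum.
  by apply: aeW => x; rewrite (ger0_norm (sumr_ge0 _ _)) ?norm_max_fun_le.
apply: le_trans (Lnorm_sum_le _ _ _ _ p1 mnf _) _.
rewrite (eq_bigr (fun i => 'N[lebesgue_measure]_p[EFin \o f i])) // => i _.
by rewrite -(Lnorm_abse lebesgue_measure (EFin \o f i)); apply: eq_Lnorm.
Qed.

End min_max_fun.

(* Typeclass inference does not find this instance through the generic hint
   of the library. *)
#[local] Instance lebesgue_ae_filter (R : realType) :
  Filter (almost_everywhere (@lebesgue_measure R)) := ae_filter_ringOfSetsType _.

Section density.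
Context {R : realType}.

Lemma density_measure_exists (h : R -> R) :
  lebesgue_measure.-integrable setT (EFin \o h) ->
  {ae lebesgue_measure, forall x, 0 <= h x} ->
  exists m : {measure set (measurableTypeR R) -> \bar R},
    fin_num_fun m /\ forall A, measurable A ->
      m A = (\int[lebesgue_measure]_(x in A) (h x)%:E)%E.
Proof.
move=> ih h0; have ih' := integrable_funrpos measurableT ih.
have int_ge0 (E : set (measurableTypeR R)) :
    (0 <= \int[lebesgue_measure]_(x in E) (h^\+ x)%:E)%E.
  by apply: integral_ge0 => x _; rewrite lee_fin funrpos_ge0.
have meas_h : measurable_fun (setT : set (measurableTypeR R)) h.
  by apply/measurable_EFinP; exact: measurable_int ih.
exists (measure_of_charge (induced_charge ih') int_ge0); split.
  move=> A mA; apply: integrable_fin_num => //.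
  exact: integrableS measurableT mA (subsetT _) ih'.
by move=> A mA; rewrite (integral_funrpos_ae _ _ _ _ meas_h h0).
Qed.

Lemma density_between (P : {finite_measure set R -> \bar R}) (l u : R -> R) :
  lebesgue_measure.-integrable setT (EFin \o l) ->
  lebesgue_measure.-integrable setT (EFin \o u) ->
  {ae lebesgue_measure, forall x, 0 <= l x} ->
  {ae lebesgue_measure, forall x, 0 <= u x} ->
  (forall a b : R, (a <= b)%R ->
    \int[lebesgue_measure]_(x in `]a, b]%classic) (l x)%:E <= P `]a, b]%classic
      <= \int[lebesgue_measure]_(x in `]a, b]%classic) (u x)%:E)%E ->
  exists g : R -> R,
    [/\ lebesgue_measure.-integrable setT (EFin \o g),
        forall A : set R, measurable A ->
          P A = (\int[lebesgue_measure]_(x in A) (g x)%:E)%E &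
        {ae lebesgue_measure, forall x, l x <= g x <= u x}].
Proof.
move=> il iu l0 u0 lPu.
have [mL [mL_fin mLE]] := density_measure_exists l il l0.
have [mU [mU_fin mUE]] := density_measure_exists u iu u0.
have le_mU (A : set (measurableTypeR R)) : measurable A ->
    (measureR P A <= \int[lebesgue_measure]_(x in A) (u x)%:E)%E.
  move=> mA; rewrite -mUE //.
  apply: (le_measure_of_itv _ _ (measureR_fin P) mU_fin _ A mA) => a b ab.
  by rewrite mUE //; have /andP[] := lPu a b ab.
have ge_mL (A : set (measurableTypeR R)) : measurable A ->
    (\int[lebesgue_measure]_(x in A) (l x)%:E <= measureR P A)%E.
  move=> mA; rewrite -mLE //.
  apply: (le_measure_of_itv _ _ mL_fin (measureR_fin P) _ A mA) => a b ab.
  by rewrite mLE //; have /andP[] := lPu a b ab.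
have P_ll : measureR P `<< lebesgue_measure.
  apply/null_content_dominatesP => A mA A0; apply/eqP.
  rewrite eq_le measure_ge0 andbT (le_trans (le_mU A mA)) // null_set_integral //.
  by apply: measurable_funTS; exact: measurable_int iu.
have [h [_ h_fin ih hE]] := radon_nikodym_sigma_finite P_ll.
pose g x := fine (h x).
have PE A : measurable A -> P A = (\int[lebesgue_measure]_(x in A) (g x)%:E)%E.
  by move=> mA; rewrite (hE A mA); apply: eq_integral => x _; rewrite /g fineK.
have ig : lebesgue_measure.-integrable setT (EFin \o g).
  by rewrite (_ : EFin \o g = h) //; apply/funext => x; rewrite /= /g fineK.
exists g; split => //.
have lg : {ae lebesgue_measure, forall x, l x <= g x}.
  by apply: ae_le_of_integral_le => // E mE; rewrite -PE //; exact: ge_mL.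
have gu : {ae lebesgue_measure, forall x, g x <= u x}.
  by apply: ae_le_of_integral_le => // E mE; rewrite -PE //; exact: le_mU.
by apply: filterS2 lg gu => x lgx gux; apply/andP.
Qed.

End density.

Lemma Ftheta_itv_between (R : realType) (N : nat) (lam : 'I_N -> R)
    (theta : R) (nu : 'I_N -> probability R R) (P : probability R R)
    (a b : R) (c d : \bar R) :
  (forall i, 0 <= lam i) -> \sum_(i < N) lam i = 1 -> 0 <= theta <= 1 ->
  (forall x, mcdf P x = Ftheta lam theta (fun i => nu i) x) ->
  c \is a fin_num -> d \is a fin_num -> a <= b ->
  (forall i, c <= nu i `]a, b]%classic <= d)%E ->
  (c <= P `]a, b]%classic <= d)%E.
Proof.
move=> lam_ge0 lam_sum1 theta01 PE cfin dfin ab nu_cd.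
have itvE (Q : probability R R) :
    Q `]a, b]%classic = (mcdf Q b - mcdf Q a)%:E.
  exact: mcdf_itv (measureR_fin Q) _ _ ab.
rewrite -(fineK cfin) -(fineK dfin) itvE !lee_fin !PE.
apply: Ftheta_increment_between => // i.
by rewrite -!lee_fin fineK // fineK // -itvE.
Qed.

Lemma vmed_density_between {R : realType} {N : nat} {lam : 'I_N -> R}
    {theta : R} {nu : 'I_N -> probability R R} {nutheta : probability R R}
    {f : 'I_N -> R -> R} :
  (forall i, 0 <= lam i) -> \sum_(i < N) lam i = 1 -> 0 <= theta <= 1 ->
  (forall i, lebesgue_measure.-integrable setT (EFin \o f i)) ->
  (forall i (A : set R), measurable A ->
     nu i A = (\int[lebesgue_measure]_(x in A) (f i x)%:E)%E) ->
  {ae lebesgue_measure, forall x i, 0 <= f i x} ->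
  (forall x, mcdf nutheta x = Ftheta lam theta (fun i => nu i) x) ->
  exists g : R -> R,
    [/\ lebesgue_measure.-integrable setT (EFin \o g),
        forall A : set R, measurable A ->
          nutheta A = (\int[lebesgue_measure]_(x in A) (g x)%:E)%E &
        {ae lebesgue_measure, forall x, min_fun f x <= g x <= max_fun f x}].
Proof.
move=> lam_ge0 lam_sum1 theta01 fi nuE f_ge0 nuthetaE.
have mf i : measurable_fun (setT : set (measurableTypeR R)) (f i).
  by apply/measurable_EFinP; exact: measurable_int (fi i).
have [imin imax] := (integrable_min_fun mf fi, integrable_max_fun mf fi).
apply: (density_between _ _ _ imin imax).
- by apply: filterS f_ge0 => x; exact: min_fun_ge0.
- by apply: filterS f_ge0 => x; exact: max_fun_ge0.
move=> a b ab; have onI (h : R -> R) :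
    lebesgue_measure.-integrable setT (EFin \o h) ->
    lebesgue_measure.-integrable `]a, b]%classic (EFin \o h).
  by move=> ih; apply: integrableS ih => //; exact: measurable_itv.
apply: Ftheta_itv_between nuthetaE _ _ ab _ => //.
- exact: integrable_fin_num (onI _ imin).
- exact: integrable_fin_num (onI _ imax).
move=> i; rewrite nuE //; apply/andP; split; apply: le_integral => //; try exact: onI.
- by move=> x _; rewrite lee_fin min_fun_le.
- by move=> x _; rewrite lee_fin le_max_fun.
Qed.

Theorem theorem4p6 (R : realType) (N : nat) (lam : 'I_N -> R)
  (hlam0 : forall i, 0 <= lam i) (hlam1 : \sum_(i < N) lam i = 1)
  (nu : 'I_N -> probability R R)
  (hnu1 : forall i, (\int[nu i]_x (`|x|)%:E < +oo)%E)
  (theta : R) (htheta : 0 <= theta <= 1)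
  (f : 'I_N -> R -> R)
  (hfint : forall i, lebesgue_measure.-integrable setT (EFin \o f i))
  (hdens : forall i (A : set R), measurable A ->
     nu i A = (\int[lebesgue_measure]_(x in A) (f i x)%:E)%E)
  (nutheta : probability R R)
  (hnutheta : forall x, mcdf nutheta x = Ftheta lam theta (fun i => nu i) x) :
  exists g : R -> R,
    [/\ lebesgue_measure.-integrable setT (EFin \o g),
        forall A : set R, measurable A ->
          nutheta A = (\int[lebesgue_measure]_(x in A) (g x)%:E)%E,
        {ae lebesgue_measure, forall x, min_fun f x <= g x <= max_fun f x} &
        forall p : \bar R, (1 <= p)%E ->
          (forall i, ('N[lebesgue_measure]_p[EFin \o f i] < +oo)%E) ->
          [/\ ('N[lebesgue_measure]_p[EFin \o g] < +oo)%E,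
              ('N[lebesgue_measure]_p[EFin \o min_fun f]
                 <= 'N[lebesgue_measure]_p[EFin \o g])%E,
              ('N[lebesgue_measure]_p[EFin \o g]
                 <= 'N[lebesgue_measure]_p[EFin \o max_fun f])%E &
              ('N[lebesgue_measure]_p[EFin \o max_fun f]
                 <= \sum_(i < N) 'N[lebesgue_measure]_p[EFin \o f i])%E]].
Proof.
have mf i : measurable_fun (setT : set (measurableTypeR R)) (f i).
  by apply/measurable_EFinP; exact: measurable_int (hfint i).
have f_ge0 : {ae lebesgue_measure, forall x i, 0 <= f i x}.
  apply: filter_forall => i; apply: ae_ge0_of_integral_ge0 (hfint i) _ => E mE.
  by rewrite -hdens // measure_ge0.
have [g [ig nuthetaE g_between]] :=
  vmed_density_between hlam0 hlam1 htheta hfint hdens f_ge0 hnutheta.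
exists g; split => // p p1 f_fin.
have mg : measurable_fun (setT : set (measurableTypeR R)) g.
  by apply/measurable_EFinP; exact: measurable_int ig.
have [n_min n_max] : ('N[lebesgue_measure]_p[EFin \o min_fun f]
      <= 'N[lebesgue_measure]_p[EFin \o g] /\
    'N[lebesgue_measure]_p[EFin \o g] <= 'N[lebesgue_measure]_p[EFin \o max_fun f])%E.
  apply: Lnorm_le_ae_between => //; [exact: measurable_min_fun|exact: measurable_max_fun|].
  apply: filterS2 f_ge0 g_between => x fx /andP[mgx gMx].
  by split => //; exact: min_fun_ge0.
have n_sum := Lnorm_max_fun_le_sum mf p p1.
split => //; apply: le_lt_trans (le_trans n_max n_sum) _.
exact: lte_sum_pinfty.
Qed.
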